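(* Let $q\in\mathbb{C}[x_0,\dots,x_3]_2$ be a quadratic form of rank four. Let $l\in S_1$ and let $q_l\in T_2$ be such that $q_l(q^2)=l^2$. Then $q_l\in\langle q^{-1},p_l^2\rangle$. In particular, $\{q_l=0\}$ is tangent to $Q^{-1}$ along their intersection, i.e. along the conic section $\{p_l=q^{-1}=0\}$, where $\{p_l=0\}$ is the polar plane to $[l]$ with respect to $Q^{-1}$.
   Context: $S=\mathbb{C}[x_0,\dots,x_3]$, $T=\mathbb{C}[y_0,\dots,y_3]$; $T$ acts on $S$ and $S$ acts on $T$ by differentiation. $q^{-1}\in T_2$ is the inverse quadric: the quadric such that $S_1\to T_1$, $l\mapsto l(q^{-1})$, is inverse to $T_1\to S_1$, $g\mapsto g(q)$ (e.g. $q=x_0x_1+x_2x_3$, $q^{-1}=y_0y_1+y_2y_3$). $Q^{-1}=\{q^{-1}=0\}\subset\mathbb{P}(S_1)$ and $p_l=l(q^{-1})\in T_1$, so that $p_l(q)=l$. *)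

From HB Require Import structures.
From mathcomp Require Import all_boot all_order all_algebra.
From mathcomp Require Import reals.
From mathcomp.real_closed Require Import complex.
From mathcomp Require Import mpoly.

Set Implicit Arguments. Unset Strict Implicit. Unset Printing Implicit Defensive.
Import Order.TTheory GRing.Theory Num.Theory.
Local Open Scope ring_scope.

Notation CC R := (complex (Real.sort R)).

(* Both S = C[x_0..x_3] and T = C[y_0..y_3] are represented by {mpoly C[4]};
   the variable 'X_i stands for x_i in S and for y_i in T. *)

(* Apolarity action by differentiation: g acts on f as g(d/dx_0,...,d/dx_3) f,
   i.e. sum over monomials m of g of  g_m * d^m f. *)
Definition apolar (K : ringType) (n : nat) (g f : {mpoly K[n]}) : {mpoly K[n]} :=
  \sum_(m <- msupp g) g@_m *: mderivm m f.

(* Hessian (matrix of second partials, constant for a quadric) *)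
Definition hessian (K : ringType) (n : nat) (q : {mpoly K[n]}) : 'M[K]_n :=
  \matrix_(i < n, j < n) (mderiv i (mderiv j q))@_0%MM.

Definition quadric_of_rank (K : fieldType) (n : nat) (q : {mpoly K[n]}) (r : nat) :=
  (q \is 2.-homog) /\ \rank (hessian q) = r.

Definition inverse_quadric (K : ringType) (n : nat) (q qinv : {mpoly K[n]}) :=
  [/\ qinv \is 2.-homog,
      (forall g : {mpoly K[n]}, g \is 1.-homog -> apolar (apolar g q) qinv = g) &
      (forall l : {mpoly K[n]}, l \is 1.-homog -> apolar (apolar l qinv) q = l)].

From HB Require Import structures.
From mathcomp Require Import all_boot all_order all_algebra.
From mathcomp Require Import reals.
From mathcomp.real_closed Require Import complex.
From mathcomp Require Import mpoly.
From mathcomp Require Import ring.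
Set Implicit Arguments. Unset Strict Implicit. Unset Printing Implicit Defensive.
Import GRing.Theory Num.Theory.
Local Open Scope ring_scope.

(* Write [f \mPo grad g] for the substitution x_i := d_i g.  For a quadratic
   operator D, Leibniz's rule gives D(q^2) = 2 q D(q) + 2 (D \mPo grad q), and
   D(q) is a constant c.  Substituting grad q^-1 in l^2 = 2 c q + 2 (D \mPo grad q):
   the inverse property says d_i q \mPo grad q^-1 = y_i, so the last term becomes
   2 D, Euler's formula turns q into q^-1, and l becomes p_l = l(q^-1).  Hence
   p_l^2 = 2 c q^-1 + 2 D. *)

Lemma comp_mpolyA (K : comNzRingType) (k n m : nat) (p : {mpoly K[k]})
    (t : k.-tuple {mpoly K[n]}) (t' : n.-tuple {mpoly K[m]}) :
  (p \mPo t) \mPo t' = p \mPo [tuple tnth t i \mPo t' | i < k].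
Proof.
rewrite [p \mPo t]comp_mpolyEX [RHS]comp_mpolyEX raddf_sum.
apply: eq_bigr => m' _; rewrite /= comp_mpolyZ !comp_mpolyX rmorph_prod.
by congr (_ *: _); apply: eq_bigr => i _; rewrite rmorphXn tnth_map tnth_ord_tuple.
Qed.

Section Apolarity.
Variables (n : nat) (K : comNzRingType).
Implicit Types (p f D : {mpoly K[n]}).

Lemma mdeg_eqS_addU (m : 'X_{1..n}) d :
  mdeg m = d.+1 -> exists i m', m = (U_(i) + m')%MM /\ mdeg m' = d.
Proof.
move=> hm; have [i mi_neq0|m_eq0] := pickP (fun i => m i != 0%N); last first.
  suff m0 : m = 0%MM by rewrite m0 mdeg0 in hm.
  by apply/mnmP => j; rewrite mnm0E; apply/eqP/negbFE/m_eq0.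
have le1m : (U_(i) <= m)%MM by rewrite lep1mP.
exists i, (m - U_(i))%MM; split; first by rewrite addmC submK.
by have := mdegD (m - U_(i)) U_(i); rewrite submK // hm mdeg1 addn1 => -[].
Qed.

Lemma mdeg_eq2_addU (m : 'X_{1..n}) :
  mdeg m = 2%N -> exists i j, m = (U_(i) + U_(j))%MM.
Proof.
move=> /mdeg_eqS_addU [i [m' [-> /mdeg_eqS_addU [j [m'' [-> /eqP]]]]]].
by rewrite mdeg_eq0 => /eqP ->; exists i, j; rewrite addm0.
Qed.

Lemma mderivm_dhomog d m p :
  p \is d.-homog -> mderivm m p \is (d - mdeg m)%N.-homog.
Proof.
move=> hp; apply/dhomogP => m'; rewrite mcoeff_msupp mcoeff_mderivm => nz.
have : (m + m')%MM \in msupp p.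
  by rewrite mcoeff_msupp; apply: contra nz => /eqP ->; rewrite mul0rn.
by move/(dhomog_mf hp) => /= <-; rewrite mdegD addKn.
Qed.

Lemma dhomog0_mpolyC p : p \is 0.-homog -> p = (p@_0%MM)%:MP.
Proof.
move=> hp; apply/mpolyP => m; rewrite mcoeffC.
have [->|m_neq0] := eqVneq m 0%MM; first by rewrite mulr1.
by rewrite mulr0 (dhomog_nemf_coeff hp) // mdeg_eq0.
Qed.

Lemma apolarX m f : apolar 'X_[m] f = mderivm m f.
Proof. by rewrite /apolar msuppX big_seq1 mcoeffX eqxx scale1r. Qed.

Lemma apolar_dhomog d e D f : D \is d.-homog -> f \is e.-homog ->
  apolar D f \is (e - d)%N.-homog.
Proof.
move=> hD hf; rewrite /apolar big_seq; apply: rpred_sum => m hm.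
by apply: rpredZ; rewrite -(dhomog_mf hD hm); exact: mderivm_dhomog.
Qed.

Definition grad f : n.-tuple {mpoly K[n]} := [tuple mderiv i f | i < n].

Lemma comp_grad_X i f : 'X_i \mPo grad f = mderiv i f.
Proof. by rewrite comp_mpolyXU -tnth_nth tnth_map tnth_ord_tuple. Qed.

Lemma apolar_dhomog1 p f : p \is 1.-homog -> apolar p f = p \mPo grad f.
Proof.
move=> hp; rewrite comp_mpolyEX /apolar; apply: eq_big_seq => m hm.
have /mdeg1P[i /eqP ->] : mdeg m == 1%N by rewrite (dhomog_mf hp hm).
by rewrite comp_grad_X mderivmU1m.
Qed.

Lemma euler_dhomog d p : p \is d.-homog -> \sum_(i < n) 'X_i * mderiv i p = p *+ d.
Proof.
move=> hp; rewrite {1}(mpolyE p).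
under eq_bigr => i _ do rewrite raddf_sum mulr_sumr.
rewrite exchange_big /= [in RHS](mpolyE p) -sumrMnl; apply: eq_big_seq => m hm.
transitivity (\sum_(i < n) (m i)%:R *: (p@_m *: 'X_[m])); last first.
  by rewrite -scaler_suml -natr_sum -mdegE (dhomog_mf hp hm) scaler_nat.
apply: eq_bigr => i _; rewrite mderivZ mderivX.
have [->|mi_neq0] := eqVneq (m i) 0%N; first by rewrite !scale0r scaler0 mulr0.
rewrite -!scalerAr mulrC -mpolyXD submK ?lep1mP //.
by rewrite scalerA mulrC -scalerA.
Qed.

Lemma mderivm_sqr m f : mdeg m = 2%N ->
  mderivm m (f ^+ 2) = (f * mderivm m f + ('X_[m] \mPo grad f)) *+ 2.
Proof.
move=> /mdeg_eq2_addU [i [j ->]]; rewrite !mderivmDm !mderivmU1m mpolyXD rmorphM /=.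
by rewrite !comp_grad_X expr2 !mderivM mderivD !mderivM; ring.
Qed.

Lemma apolar_sqr D f : D \is 2.-homog ->
  apolar D (f ^+ 2) = (f * apolar D f + (D \mPo grad f)) *+ 2.
Proof.
move=> hD; rewrite /apolar comp_mpolyEX mulr_sumr -big_split -sumrMnl /=.
apply: eq_big_seq => m hm; rewrite mderivm_sqr ?(dhomog_mf hD hm) //.
by rewrite -!scaler_nat scalerA mulrC -scalerA scalerDr scalerAr.
Qed.

End Apolarity.

Section InverseQuadric.
Variables (n : nat) (K : fieldType) (q qinv : {mpoly K[n]}).
Hypotheses (two_neq0 : 2 != 0 :> K) (q2 : q \is 2.-homog) (qinv2 : qinv \is 2.-homog).
Hypothesis apolar_qK : forall g, g \is 1.-homog -> apolar (apolar g q) qinv = g.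

Lemma comp_grad_inverse_deriv i : mderiv i q \mPo grad qinv = 'X_i.
Proof.
have Xi1 : ('X_i : {mpoly K[n]}) \is 1.-homog by rewrite dhomogX /= mdeg1.
have := mderivm_dhomog U_(i) q2; rewrite mdeg1 mderivmU1m => dq1.
by rewrite -apolar_dhomog1 // -mderivmU1m -apolarX apolar_qK.
Qed.

Lemma comp_grad_inverseK D : (D \mPo grad q) \mPo grad qinv = D.
Proof.
rewrite comp_mpolyA -[RHS]comp_mpoly_id; congr (D \mPo _); apply: eq_mktuple => i.
by rewrite tnth_map tnth_ord_tuple comp_grad_inverse_deriv.
Qed.

Lemma comp_grad_inverse_self : q \mPo grad qinv = qinv.
Proof.
have q2E : (q *+ 2) \mPo grad qinv = qinv *+ 2.
  rewrite -(euler_dhomog q2) -(euler_dhomog qinv2) raddf_sum; apply: eq_bigr => i _.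
  by rewrite [LHS]rmorphM /= comp_grad_X comp_grad_inverse_deriv mulrC.
by apply: (scalerI two_neq0); rewrite !scaler_nat -comp_mpolyMn q2E.
Qed.

Lemma apolar_sqr_eq_sqr D l : l \is 1.-homog -> D \is 2.-homog ->
  apolar D (q ^+ 2) = l ^+ 2 ->
  D = 2^-1 *: (apolar l qinv) ^+ 2 - (apolar D q)@_0%MM *: qinv.
Proof.
move=> l1 D2; have := apolar_dhomog D2 q2; rewrite subnn => Dq0.
rewrite apolar_sqr // {1}(dhomog0_mpolyC Dq0).
move=> /(congr1 (comp_mpoly (grad qinv))).
rewrite raddfMn raddfD rmorphXn /= rmorphM /= comp_mpolyC comp_grad_inverse_self.
rewrite comp_grad_inverseK -apolar_dhomog1 // => <-.
rewrite -scaler_nat scalerA mulVf // scale1r mulrC mul_mpolyC.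
by rewrite addrAC subrr add0r.
Qed.

End InverseQuadric.

Theorem lemma4p8 (R : realType) (q qinv l ql : {mpoly (CC R)[4]}) :
  quadric_of_rank q 4 ->
  inverse_quadric q qinv ->
  l \is 1.-homog ->
  ql \is 2.-homog ->
  apolar ql (q ^+ 2) = l ^+ 2 ->
  exists a b : CC R, ql = a *: qinv + b *: (apolar l qinv) ^+ 2.
Proof.
move=> [q2 _] [qinv2 apolar_qK _] l1 ql2.
have two_neq0 : 2 != 0 :> CC R by rewrite pnatr_eq0.
move=> /(apolar_sqr_eq_sqr two_neq0 q2 qinv2 apolar_qK l1 ql2) ->.
by exists (- (apolar ql q)@_0%MM), 2^-1; rewrite scaleNr addrC.
Qed.
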